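(* Let $K$ be the set of nonempty open connected intervals of $S^1$ whose closure is different from $S^1$, with symmetry group the Möbius group. There exists $f\in\mathrm C^1(K,\mathcal D)^{\text{Möb}}$ such that $f_b$ is nonzero and non-negative for every non-degenerate 1-simplex $b$.
   Context: $K$ is ordered by inclusion; the Möbius group acts on $S^1$ by diffeomorphisms and on $K$ by $o\mapsto s(o)$. A 1-simplex is $b=(|b|;\partial_0b,\partial_1b)$ with $|b|,\partial_0b,\partial_1b\in K$ and $\partial_0b,\partial_1b\subseteq|b|$; it is degenerate if $|b|=\partial_0b=\partial_1b$. $s$ acts by $s(b)=(s(|b|);s(\partial_0b),s(\partial_1b))$. $\mathcal D_a$: real smooth functions on $S^1$ vanishing outside the closure of $a$. $\mathrm C^1(K,\mathcal D)$: maps $b\mapsto f_b\in\mathcal D_{|b|}$ on 1-simplices, with action $(sf)_b=f_{s(b)}\circ s$; $\mathrm C^1(K,\mathcal D)^{\text{Möb}}$ denotes the fixed points. *)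

From Stdlib Require Import Reals.
From Coquelicot Require Import Coquelicot.
Open Scope R_scope.

Definition circ (z : C) : Prop := Cmod z = 1.

Definition eang (t : R) : C := (cos t, sin t).

Definition cset := C -> Prop.

(** Elements of K: open arcs {e^{it} | a < t < a + l} with 0 < l < 2 pi,
    i.e. nonempty open connected intervals of S^1 whose closure is not S^1. *)
Definition inK (I : cset) : Prop :=
  exists a l : R, 0 < l /\ l < 2 * PI /\
    forall z, I z <-> exists t, a < t /\ t < a + l /\ z = eang t.

(** Topological closure (in C; for subsets of S^1 it agrees with the closure in S^1). *)
Definition closure (I : cset) : cset :=
  fun z => forall eps : R, 0 < eps -> exists w, I w /\ Cmod (Cminus z w) < eps.

(** Smooth real functions on S^1: the angle lift t |-> F(e^{it}) is C^infinity. *)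
Definition smooth_S1 (F : C -> R) : Prop :=
  forall (n : nat) (t : R), ex_derive_n (fun s => F (eang s)) n t.

Definition inD (I : cset) (F : C -> R) : Prop :=
  smooth_S1 F /\ forall z, circ z -> ~ closure I z -> F z = 0.

(** The Moebius group PSU(1,1) ~ PSL(2,R) acting on S^1:
    z |-> (alpha z + beta) / (conj beta z + conj alpha), |alpha|^2 - |beta|^2 = 1. *)
Definition is_mob (al be : C) : Prop := Cmod al ^ 2 - Cmod be ^ 2 = 1.

Definition mob (al be : C) (z : C) : C :=
  Cdiv (Cplus (Cmult al z) be) (Cplus (Cmult (Cconj be) z) (Cconj al)).

Definition img (s : C -> C) (I : cset) : cset := fun z => exists w, I w /\ z = s w.

Definition same_set (A B : cset) : Prop := forall z, A z <-> B z.
Definition subset (A B : cset) : Prop := forall z, A z -> B z.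

Record simplex1 := Simplex1 { supp : cset; bd0 : cset; bd1 : cset }.

Definition is_simplex1 (b : simplex1) : Prop :=
  inK (supp b) /\ inK (bd0 b) /\ inK (bd1 b) /\
  subset (bd0 b) (supp b) /\ subset (bd1 b) (supp b).

Definition degenerate (b : simplex1) : Prop :=
  same_set (supp b) (bd0 b) /\ same_set (bd0 b) (bd1 b).

Definition act_simplex (s : C -> C) (b : simplex1) : simplex1 :=
  Simplex1 (img s (supp b)) (img s (bd0 b)) (img s (bd1 b)).

Definition cochain1 (f : simplex1 -> C -> R) : Prop :=
  forall b, is_simplex1 b -> inD (supp b) (f b).

Definition mob_invariant (f : simplex1 -> C -> R) : Prop :=
  forall al be : C, is_mob al be ->
  forall b, is_simplex1 b ->
  forall z, circ z -> f (act_simplex (mob al be) b) (mob al be z) = f b z.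

From Stdlib Require Import Reals Lra Psatz Classical ZArith Lia.
From Stdlib Require Import ClassicalEpsilon FunctionalExtensionality PropExtensionality.
From Coquelicot Require Import Coquelicot.
Open Scope R_scope.

(* A Moebius map fixing a non-degenerate 1-simplex [b] fixes the endpoints of [|b|]
   and a further endpoint of [d0 b] or [d1 b]; fixing three points of the circle it is
   the identity.  So the group acts freely on non-degenerate simplices, and we may pick
   a representative [b0] in each orbit, with [|b0|] the arc from [p] to [q], and set
   [f_(g b0) z = psi (orient p (g^-1 z) q)], where [psi x = exp (-1/x)] for [x > 0]
   is the flat smooth cutoff and [orient p . q] is positive exactly on that arc.
   Degenerate simplices get [f_b = 0]. *)

Lemma circ_neq0 z : circ z -> z <> 0%C.
Proof. intros H E. unfold circ in H. rewrite E, Cmod_0 in H. lra. Qed.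

Lemma circ_mul_conj z : circ z -> (z * Cconj z)%C = 1%C.
Proof. intro H. rewrite <- Cmod2_conj. unfold circ in H. rewrite H. simpl. f_equal; ring. Qed.

Lemma circ_conj z : circ z -> Cconj z = (/ z)%C.
Proof.
  intro H. pose proof (circ_mul_conj z H). pose proof (circ_neq0 z H).
  transitivity (/ z * (z * Cconj z))%C; [field; auto | rewrite H0; field; auto].
Qed.

Lemma circ_coord z : circ z -> fst z * fst z + snd z * snd z = 1.
Proof.
  intro H. destruct z as [x y]. unfold circ, Cmod in H. simpl in *.
  apply (f_equal (fun r => r * r)) in H. rewrite sqrt_sqrt in H by nra. nra.
Qed.

Lemma circ_eang t : circ (eang t).
Proof.
  unfold circ, Cmod, eang; simpl.
  replace (cos t * (cos t * 1) + sin t * (sin t * 1)) with (Rsqr (sin t) + Rsqr (cos t))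
    by (unfold Rsqr; ring).
  rewrite sin2_cos2. apply sqrt_1.
Qed.

Lemma Cmult_eq0 (a b : C) : (a * b = 0)%C -> a = 0%C \/ b = 0%C.
Proof.
  intro H. destruct (classic (a = 0%C)) as [Ha|Ha]; auto.
  destruct (classic (b = 0%C)) as [Hb|Hb]; auto.
  exfalso. exact (Cmult_neq_0 a b Ha Hb H).
Qed.

Lemma Cdiv_eq_iff (n1 d1 n2 d2 : C) : d1 <> 0%C -> d2 <> 0%C ->
  ((n1 / d1)%C = (n2 / d2)%C <-> (n1 * d2 - n2 * d1)%C = 0%C).
Proof.
  intros H1 H2. split; intro E.
  - replace n1 with (n1 / d1 * d1)%C by (field; auto). rewrite E. field. auto.
  - replace n1 with ((n1 * d2 - n2 * d1) / d2 + n2 * d1 / d2)%C by (field; auto).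
    rewrite E. field. auto.
Qed.

Lemma quadratic_eq0_of_three_roots (A B C0 z1 z2 z3 : C) :
  z1 <> z2 -> z1 <> z3 -> z2 <> z3 ->
  (A * z1 * z1 + B * z1 + C0 = 0)%C -> (A * z2 * z2 + B * z2 + C0 = 0)%C ->
  (A * z3 * z3 + B * z3 + C0 = 0)%C -> A = 0%C /\ B = 0%C /\ C0 = 0%C.
Proof.
  intros d12 d13 d23 E1 E2 E3.
  assert (sub_neq0 : forall u v : C, u <> v -> (u - v)%C <> 0%C).
  { intros u v Huv E. apply Huv. rewrite <- (Cplus_0_l v), <- E. ring. }
  assert (slope : forall u v, u <> v -> (A * u * u + B * u + C0 = 0)%C ->
            (A * v * v + B * v + C0 = 0)%C -> (A * (u + v) + B = 0)%C).
  { intros u v Huv Eu Ev.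
    destruct (Cmult_eq0 (u - v) (A * (u + v) + B)) as [G|G]; auto.
    - transitivity ((A * u * u + B * u + C0) - (A * v * v + B * v + C0))%C; [ring|].
      rewrite Eu, Ev. ring.
    - exfalso. exact (sub_neq0 u v Huv G). }
  pose proof (slope _ _ d12 E1 E2) as F12. pose proof (slope _ _ d13 E1 E3) as F13.
  assert (HA : A = 0%C).
  { destruct (Cmult_eq0 A (z2 - z3)) as [G|G]; auto.
    - transitivity ((A * (z1 + z2) + B) - (A * (z1 + z3) + B))%C; [ring|].
      rewrite F12, F13. ring.
    - exfalso. exact (sub_neq0 z2 z3 d23 G). }
  subst A. assert (HB : B = 0%C) by (rewrite <- F12; ring). subst B.
  repeat split. rewrite <- E1. ring.
Qed.

(** * Moebius maps of the circle *)

Lemma mob_det al be : is_mob al be -> (al * Cconj al - be * Cconj be)%C = 1%C.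
Proof.
  intro H. rewrite <- !Cmod2_conj, <- RtoC_minus. unfold is_mob in H. rewrite H. reflexivity.
Qed.

Lemma is_mob_of_det al be : (al * Cconj al - be * Cconj be)%C = 1%C -> is_mob al be.
Proof.
  intro H. rewrite <- !Cmod2_conj, <- RtoC_minus in H.
  apply (f_equal fst) in H. exact H.
Qed.

Lemma mob_al_neq0 al be : is_mob al be -> al <> 0%C.
Proof.
  intros H E. unfold is_mob in H. rewrite E, Cmod_0 in H.
  pose proof (pow2_ge_0 (Cmod be)). simpl in H. lra.
Qed.

Definition mob_den (al be z : C) : C := (Cconj be * z + Cconj al)%C.

Lemma mob_den_neq0 al be z : is_mob al be -> circ z -> mob_den al be z <> 0%C.
Proof.
  intros Hm Hz E. unfold mob_den in E.
  assert (E' : (Cconj be * z)%C = (- Cconj al)%C).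
  { replace (Cconj be * z)%C with ((Cconj be * z + Cconj al) - Cconj al)%C by ring.
    rewrite E. ring. }
  apply (f_equal Cmod) in E'. rewrite Cmod_mult, Cmod_opp, !Cmod_conj in E'.
  unfold circ in Hz. rewrite Hz, Rmult_1_r in E'. unfold is_mob in Hm. rewrite E' in Hm. lra.
Qed.

Lemma mob_num_circ al be z : circ z -> (al * z + be)%C = (z * Cconj (mob_den al be z))%C.
Proof.
  intro Hz. unfold mob_den. rewrite Cplus_conj, Cmult_conj, !Cconj_conj.
  rewrite <- (Cmult_1_r be) at 1. rewrite <- (circ_mul_conj z Hz). ring.
Qed.

Lemma mob_circ al be z : is_mob al be -> circ z -> circ (mob al be z).
Proof.
  intros Hm Hz. pose proof (mob_den_neq0 al be z Hm Hz) as Nz.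
  unfold circ, mob. fold (mob_den al be z).
  rewrite Cmod_div, mob_num_circ, Cmod_mult, Cmod_conj by auto. unfold circ in Hz. rewrite Hz.
  field. apply Rgt_not_eq, Cmod_gt_0. exact Nz.
Qed.

Lemma mob_diff al be z p : is_mob al be -> circ z -> circ p ->
  (mob al be z - mob al be p)%C = ((z - p) / (mob_den al be z * mob_den al be p))%C.
Proof.
  intros Hm Hz Hp. pose proof (mob_den_neq0 _ _ _ Hm Hz). pose proof (mob_den_neq0 _ _ _ Hm Hp).
  pose proof (mob_det _ _ Hm) as M. unfold mob. fold (mob_den al be z) (mob_den al be p).
  unfold mob_den in *. rewrite <- (Cmult_1_r (z - p)), <- M. field; auto.
Qed.

Lemma is_mob_id : is_mob 1%C 0%C.
Proof. unfold is_mob. rewrite Cmod_1, Cmod_0. ring. Qed.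

Lemma mob_id z : mob 1%C 0%C z = z.
Proof.
  destruct z as [x y]. unfold mob, Cconj, Cdiv, Cmult, Cplus, Cinv. simpl.
  apply injective_projections; simpl; field.
Qed.

Lemma is_mob_inv al be : is_mob al be -> is_mob (Cconj al) (- be)%C.
Proof. unfold is_mob. rewrite Cmod_conj, Cmod_opp. auto. Qed.

Lemma mob_inv_l al be z : is_mob al be -> circ z -> mob (Cconj al) (- be)%C (mob al be z) = z.
Proof.
  intros Hm Hz. pose proof (mob_den_neq0 _ _ _ Hm Hz). pose proof (mob_det _ _ Hm) as M.
  unfold mob. fold (mob_den al be z). rewrite Copp_conj, Cconj_conj.
  unfold mob_den in *.
  transitivity (z * (al * Cconj al - be * Cconj be) / (al * Cconj al - be * Cconj be))%C.
  - field. rewrite M. split; auto. apply C1_nz.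
  - rewrite M. field.
Qed.

Lemma mob_inv_r al be z : is_mob al be -> circ z -> mob al be (mob (Cconj al) (- be)%C z) = z.
Proof.
  intros Hm Hz. pose proof (mob_inv_l _ _ z (is_mob_inv _ _ Hm) Hz) as H.
  rewrite Cconj_conj in H. replace (- - be)%C with be in H by ring. exact H.
Qed.

Lemma mob_inj al be z w : is_mob al be -> circ z -> circ w -> mob al be z = mob al be w -> z = w.
Proof.
  intros Hm Hz Hw E. rewrite <- (mob_inv_l al be z), <- (mob_inv_l al be w) by auto. congruence.
Qed.

Definition mob_comp_al (al be ga de : C) : C := (al * ga + be * Cconj de)%C.
Definition mob_comp_be (al be ga de : C) : C := (al * de + be * Cconj ga)%C.

Lemma is_mob_comp al be ga de : is_mob al be -> is_mob ga de ->
  is_mob (mob_comp_al al be ga de) (mob_comp_be al be ga de).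
Proof.
  intros H1 H2. apply is_mob_of_det. unfold mob_comp_al, mob_comp_be.
  rewrite !Cplus_conj, !Cmult_conj, !Cconj_conj.
  transitivity ((al * Cconj al - be * Cconj be) * (ga * Cconj ga - de * Cconj de))%C.
  - ring.
  - rewrite (mob_det _ _ H1), (mob_det _ _ H2). ring.
Qed.

Lemma mob_comp al be ga de z : is_mob al be -> is_mob ga de -> circ z ->
  mob al be (mob ga de z) = mob (mob_comp_al al be ga de) (mob_comp_be al be ga de) z.
Proof.
  intros H1 H2 Hz.
  pose proof (mob_den_neq0 _ _ _ H2 Hz) as N1.
  pose proof (mob_den_neq0 _ _ _ (is_mob_comp _ _ _ _ H1 H2) Hz) as N2.
  unfold mob, mob_den, mob_comp_al, mob_comp_be in *.
  rewrite !Cplus_conj, !Cmult_conj, !Cconj_conj in *.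
  field. auto.
Qed.

Lemma mob_eq_of_three_points al be ga de z1 z2 z3 : is_mob al be -> is_mob ga de ->
  circ z1 -> circ z2 -> circ z3 -> z1 <> z2 -> z1 <> z3 -> z2 <> z3 ->
  mob al be z1 = mob ga de z1 -> mob al be z2 = mob ga de z2 -> mob al be z3 = mob ga de z3 ->
  forall z, circ z -> mob al be z = mob ga de z.
Proof.
  intros H1 H2 C1 C2 C3 d12 d13 d23 E1 E2 E3.
  set (A := (al * Cconj de - ga * Cconj be)%C).
  set (B := (al * Cconj ga + be * Cconj de - ga * Cconj al - de * Cconj be)%C).
  set (C0 := (be * Cconj ga - de * Cconj al)%C).
  assert (key : forall w, circ w ->
            (mob al be w = mob ga de w <-> (A * w * w + B * w + C0 = 0)%C)).
  { intros w Hw. unfold mob.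
    rewrite (Cdiv_eq_iff _ _ _ _ (mob_den_neq0 _ _ _ H1 Hw) (mob_den_neq0 _ _ _ H2 Hw)).
    replace (A * w * w + B * w + C0)%C
      with ((al * w + be) * (Cconj de * w + Cconj ga) - (ga * w + de) * (Cconj be * w + Cconj al))%C
      by (unfold A, B, C0; ring).
    reflexivity. }
  apply key in E1, E2, E3; auto.
  destruct (quadratic_eq0_of_three_roots _ _ _ _ _ _ d12 d13 d23 E1 E2 E3) as [HA [HB HC]].
  intros z Hz. apply key; auto. rewrite HA, HB, HC. ring.
Qed.

(** * Orientation of triples of points *)

(* Twice the signed area of the triangle [p z q]; for [p <> q] on the circle it is
   positive exactly on the open arc running counterclockwise from [p] to [q]. *)
Definition orient (p z q : C) : R := Im (Cconj (z - p) * (q - p))%C.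

Lemma orient_coord p z q :
  orient p z q = (fst z - fst p) * (snd q - snd p) - (snd z - snd p) * (fst q - fst p).
Proof. destruct p, z, q. unfold orient. simpl. ring. Qed.

Lemma orient_swap p z q : orient q z p = - orient p z q.
Proof. rewrite !orient_coord. ring. Qed.

Lemma orient_self p q : orient p p q = 0.
Proof. rewrite orient_coord. ring. Qed.

Lemma orient_ends_eq p z : orient p z p = 0.
Proof. rewrite orient_coord. ring. Qed.

(* On the circle, [Y * den z * conj (den q)] is [Y] plus a real multiple of
   [Y + conj Y] plus some [c + conj c], so its imaginary part is that of [Y]. *)
Lemma Im_mob_twist al be p z q : is_mob al be -> circ p -> circ z -> circ q ->
  Im (Cconj (z - p) * (q - p) * mob_den al be z * Cconj (mob_den al be q))%C
  = Im (Cconj (z - p) * (q - p))%C.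
Proof.
  intros Hm Hp Hz Hq.
  pose proof (circ_neq0 _ Hp). pose proof (circ_neq0 _ Hz). pose proof (circ_neq0 _ Hq).
  pose proof (mob_al_neq0 _ _ Hm).
  set (Y := (Cconj (z - p) * (q - p))%C).
  set (c := (Cconj be * al * z * Y)%C).
  assert (E : (Y * mob_den al be z * Cconj (mob_den al be q))%C
              = (Y + (Cmod be ^ 2)%R * (Y + Cconj Y) + (c + Cconj c))%C).
  { unfold c, Y, mob_den. rewrite Cmod2_conj, !Cplus_conj, !Cmult_conj, !Cminus_conj, !Cconj_conj.
    rewrite !(circ_conj z), !(circ_conj p), !(circ_conj q) by auto.
    replace (Cconj al) with ((1 + be * Cconj be) / al)%C
      by (rewrite <- (mob_det _ _ Hm); field; auto).
    field. auto. }
  rewrite E. destruct Y as [y1 y2], c as [c1 c2]. simpl. ring.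
Qed.

Lemma orient_mob al be p z q : is_mob al be -> circ p -> circ z -> circ q ->
  orient (mob al be p) (mob al be z) (mob al be q) *
   (Cmod (mob_den al be z) ^ 2 * Cmod (mob_den al be p) ^ 2 * Cmod (mob_den al be q) ^ 2)
  = orient p z q.
Proof.
  intros Hm Hp Hz Hq.
  pose proof (mob_den_neq0 _ _ _ Hm Hp) as Np. pose proof (mob_den_neq0 _ _ _ Hm Hz) as Nz.
  pose proof (mob_den_neq0 _ _ _ Hm Hq) as Nq.
  assert (Cconj (mob_den al be z) <> 0%C)
    by (apply Cmod_gt_0; rewrite Cmod_conj; apply Cmod_gt_0; auto).
  assert (Cconj (mob_den al be p) <> 0%C)
    by (apply Cmod_gt_0; rewrite Cmod_conj; apply Cmod_gt_0; auto).
  unfold orient. rewrite !mob_diff by auto. rewrite <- (Im_mob_twist al be p z q) by auto.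
  rewrite <- im_scal_r, !RtoC_mult, !Cmod2_conj. f_equal.
  rewrite Cdiv_conj, Cmult_conj by (apply Cmult_neq_0; auto).
  field. repeat split; auto.
Qed.

(** * Arcs and their endpoints *)

Lemma eang_period x (k : nat) : eang (x + 2 * INR k * PI) = eang x.
Proof. unfold eang. rewrite cos_period, sin_period. reflexivity. Qed.

Lemma eang_periodZ x (m : Z) : eang (x + 2 * IZR m * PI) = eang x.
Proof.
  destruct (Z_le_gt_dec 0 m) as [H|H].
  - rewrite <- (Z2Nat.id m H), <- INR_IZR_INZ. apply eang_period.
  - rewrite <- (eang_period (x + 2 * IZR m * PI) (Z.to_nat (- m))), INR_IZR_INZ, Z2Nat.id by lia.
    f_equal. rewrite opp_IZR. ring.
Qed.

Lemma circ_eang_ex z : circ z -> exists t, z = eang t.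
Proof.
  intro H. pose proof (circ_coord z H) as E. destruct z as [x y]. simpl in E.
  assert (Sy : sqrt (1 - x²) = Rabs y).
  { rewrite <- sqrt_Rsqr_abs. f_equal. unfold Rsqr. lra. }
  assert (Bx : -1 <= x <= 1) by nra.
  destruct (Rle_or_lt 0 y) as [Hy|Hy].
  - exists (acos x). unfold eang. rewrite cos_acos, sin_acos, Sy, Rabs_pos_eq; auto.
  - exists (- acos x). unfold eang.
    rewrite cos_neg, sin_neg, cos_acos, sin_acos, Sy, Rabs_left; auto.
    f_equal. ring.
Qed.

Lemma circ_eang_window z a : circ z -> exists t, a < t <= a + 2 * PI /\ z = eang t.
Proof.
  intro H. destruct (circ_eang_ex z H) as [t0 ->]. pose proof PI_RGT_0.
  set (m := up ((a - t0) / (2 * PI))).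
  destruct (archimed ((a - t0) / (2 * PI))) as [A1 A2]. fold m in A1, A2.
  assert (E : (a - t0) / (2 * PI) * (2 * PI) = a - t0) by (field; lra).
  exists (t0 + 2 * IZR m * PI). rewrite eang_periodZ. repeat split; auto; nra.
Qed.

Lemma sin_sum3 u v : sin (2 * v) + sin (2 * u) - sin (2 * u + 2 * v) =
  4 * sin u * sin v * sin (u + v).
Proof.
  rewrite !sin_plus, !sin_2a, !cos_2a.
  pose proof (sin2_cos2 u) as Hu. pose proof (sin2_cos2 v) as Hv. unfold Rsqr in *.
  transitivity (4 * sin u * sin v * (sin u * cos v + cos u * sin v)
    + 2 * sin v * cos v * (1 - (sin u * sin u + cos u * cos u))
    + 2 * sin u * cos u * (1 - (sin v * sin v + cos v * cos v))); [ring|].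
  rewrite Hu, Hv. ring.
Qed.

Lemma orient_eang a t b : orient (eang a) (eang t) (eang b) =
  4 * sin ((t - a) / 2) * sin ((b - t) / 2) * sin ((b - a) / 2).
Proof.
  replace ((b - a) / 2) with ((t - a) / 2 + (b - t) / 2) by field. rewrite <- sin_sum3.
  replace (2 * ((b - t) / 2)) with (b - t) by field.
  replace (2 * ((t - a) / 2)) with (t - a) by field.
  replace (t - a + (b - t)) with (- (a - b)) by ring.
  rewrite orient_coord, sin_neg. unfold eang; simpl. rewrite !sin_minus. ring.
Qed.

Lemma arc_iff_orient_pos a l z : 0 < l < 2 * PI ->
  (exists t, a < t /\ t < a + l /\ z = eang t) <-> circ z /\ orient (eang a) z (eang (a + l)) > 0.
Proof.
  intro Hl. pose proof PI_RGT_0. split.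
  - intros [t [H1 [H2 ->]]]. split; [apply circ_eang|]. rewrite orient_eang.
    assert (0 < sin ((t - a) / 2)) by (apply sin_gt_0; lra).
    assert (0 < sin ((a + l - t) / 2)) by (apply sin_gt_0; lra).
    assert (0 < sin ((a + l - a) / 2)) by (apply sin_gt_0; lra).
    apply Rlt_gt. repeat apply Rmult_lt_0_compat; lra.
  - intros [Hc HD]. destruct (circ_eang_window z a Hc) as [t [[H1 H2] ->]].
    exists t. repeat split; auto. rewrite orient_eang in HD.
    destruct (Rlt_or_le t (a + l)) as [|Hge]; auto. exfalso.
    assert (S1 : 0 <= sin ((t - a) / 2)) by (apply sin_ge_0; lra).
    assert (S3 : 0 < sin ((a + l - a) / 2)) by (apply sin_gt_0; lra).
    assert (S2 : 0 <= sin (- ((a + l - t) / 2))) by (apply sin_ge_0; lra).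
    rewrite sin_neg in S2.
    assert (sin ((t - a) / 2) * sin ((a + l - t) / 2) <= 0) by nra. nra.
Qed.

(* A chord meets the circle only at its endpoints. *)
Lemma orient_eq0 p z q : circ p -> circ z -> circ q -> p <> q -> orient p z q = 0 ->
  z = p \/ z = q.
Proof.
  intros Hp Hz Hq Hpq HD. apply circ_coord in Hp, Hz, Hq. rewrite orient_coord in HD.
  destruct p as [p1 p2], z as [z1 z2], q as [q1 q2]. simpl in *.
  set (v1 := q1 - p1) in *. set (v2 := q2 - p2) in *.
  set (N := v1 * v1 + v2 * v2).
  assert (HN : N > 0).
  { unfold N. destruct (Req_dec v1 0); [destruct (Req_dec v2 0)|]; try nra.
    exfalso. apply Hpq. unfold v1, v2 in *. f_equal; lra. }
  (* [z - p] is parallel to [q - p]: write it as [lam (q - p)] *)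
  set (lam := ((z1 - p1) * v1 + (z2 - p2) * v2) / N).
  assert (U1 : z1 = p1 + lam * v1).
  { unfold lam. apply (Rmult_eq_reg_r N); [|lra].
    replace ((p1 + ((z1 - p1) * v1 + (z2 - p2) * v2) / N * v1) * N)
      with (p1 * N + ((z1 - p1) * v1 + (z2 - p2) * v2) * v1) by (field; lra).
    transitivity (p1 * N + ((z1 - p1) * v1 + (z2 - p2) * v2) * v1
                  + v2 * ((z1 - p1) * v2 - (z2 - p2) * v1)); [unfold N; ring | rewrite HD; ring]. }
  assert (U2 : z2 = p2 + lam * v2).
  { unfold lam. apply (Rmult_eq_reg_r N); [|lra].
    replace ((p2 + ((z1 - p1) * v1 + (z2 - p2) * v2) / N * v2) * N)
      with (p2 * N + ((z1 - p1) * v1 + (z2 - p2) * v2) * v2) by (field; lra).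
    transitivity (p2 * N + ((z1 - p1) * v1 + (z2 - p2) * v2) * v2
                  - v1 * ((z1 - p1) * v2 - (z2 - p2) * v1)); [unfold N; ring | rewrite HD; ring]. }
  assert (L : lam * (lam - 1) * N = 0).
  { rewrite U1, U2 in Hz. unfold N, v1, v2 in *. nra. }
  destruct (Rmult_integral (lam * (lam - 1)) N L) as [E|E]; [|lra].
  destruct (Rmult_integral _ _ E) as [E0|E1].
  - left. rewrite U1, U2, E0. f_equal; ring.
  - right. rewrite U1, U2. replace lam with 1 by lra. unfold v1, v2. f_equal; ring.
Qed.

Lemma nonneg_of_pos_near (f : R -> R) c sg L : continuity_pt f c -> 0 < L ->
  (sg = 1 \/ sg = -1) -> (forall s, 0 < s < L -> 0 < f (c + sg * s)) -> 0 <= f c.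
Proof.
  intros Hf HL Hsg Hpos. apply Rnot_lt_le. intro Hneg.
  destruct (Hf (- f c) ltac:(lra)) as [del [Hdel Hnear]].
  set (s := Rmin del L / 2).
  assert (Hs : 0 < s < L /\ s < del).
  { unfold s. pose proof (Rmin_l del L). pose proof (Rmin_r del L).
    pose proof (Rmin_glb_lt del L 0 Hdel HL). lra. }
  assert (Habs : Rabs (sg * s) = s).
  { destruct Hsg as [-> | ->]; [rewrite Rmult_1_l | replace (-1 * s) with (- s) by ring;
      rewrite Rabs_Ropp]; apply Rabs_pos_eq; lra. }
  specialize (Hpos s (proj1 Hs)).
  assert (Hclose : R_dist (f (c + sg * s)) (f c) < - f c).
  { apply Hnear. split.
    - split; [exact I|]. intro E. assert (E0 : sg * s = 0) by lra.
      rewrite E0, Rabs_R0 in Habs. lra.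
    - simpl. unfold R_dist. replace (c + sg * s - c) with (sg * s) by ring. lra. }
  unfold R_dist in Hclose. apply Rabs_def2 in Hclose. lra.
Qed.

Lemma continuity_orient_eang p q : forall t, continuity_pt (fun s => orient p (eang s) q) t.
Proof.
  intro t. apply (continuity_pt_ext (fun s => (cos s - fst p) * (snd q - snd p)
                                          - (sin s - snd p) * (fst q - fst p))).
  { intro s. rewrite orient_coord. reflexivity. }
  reg.
Qed.

(* The endpoints of an arc are determined by the arc: they are limit points of it,
   and points where [orient] vanishes lie on the chord. *)
Lemma orient_pos_set_inj p q p' q' : circ p -> circ q -> circ p' -> circ q' -> p <> q -> p' <> q' ->
  (forall z, circ z -> (orient p z q > 0 <-> orient p' z q' > 0)) -> p = p' /\ q = q'.
Proof.
  intros Hp Hq Hp' Hq' Hpq Hpq' Heq. pose proof PI_RGT_0.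
  destruct (circ_eang_window p 0 Hp) as [a [_ Ea]].
  destruct (circ_eang_window q a Hq) as [b [[Hb1 Hb2] Eb]].
  assert (Hb3 : b < a + 2 * PI).
  { destruct Hb2 as [|E]; auto. exfalso. apply Hpq.
    rewrite Ea, Eb, E. replace (a + 2 * PI) with (a + 2 * INR 1 * PI) by (simpl; ring).
    symmetry. apply eang_period. }
  set (l := b - a). assert (Eb' : q = eang (a + l)) by (rewrite Eb; unfold l; f_equal; ring).
  assert (inarc : forall t, a < t < a + l -> orient p' (eang t) q' > 0).
  { intros t Ht. apply Heq; [apply circ_eang|]. rewrite Ea, Eb'.
    apply (arc_iff_orient_pos a l (eang t)); [unfold l; lra|]. exists t. repeat split; lra. }
  assert (endpoint : forall z, circ z -> ~ orient p z q > 0 -> orient p' z q' >= 0 ->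
            z = p' \/ z = q').
  { intros z Hz Hn Hge. apply orient_eq0; auto.
    destruct (Rge_gt_or_eq_dec _ _ Hge) as [G|G]; auto. exfalso. apply Hn, Heq; auto. }
  assert (P : p = p' \/ p = q').
  { apply endpoint; auto.
    - rewrite orient_self. lra.
    - rewrite Ea. apply Rle_ge,
        (nonneg_of_pos_near (fun s => orient p' (eang s) q') a 1 l); auto;
        [apply continuity_orient_eang|unfold l; lra|].
      intros s Hs. apply inarc. lra. }
  assert (Q : q = p' \/ q = q').
  { apply endpoint; auto.
    - rewrite orient_swap, orient_self. lra.
    - rewrite Eb'. apply Rle_ge,
        (nonneg_of_pos_near (fun s => orient p' (eang s) q') (a + l) (-1) l); auto;
        [apply continuity_orient_eang|unfold l; lra|].
      intros s Hs. apply inarc. lra. }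
  destruct P as [->| ->], Q as [->| ->]; auto; try (exfalso; apply Hpq; reflexivity).
  assert (M : orient p' (eang (a + l / 2)) q' > 0) by (apply inarc; unfold l; lra).
  pose proof M as M'. apply Heq in M'; [|apply circ_eang]. rewrite orient_swap in M'. lra.
Qed.

Definition is_arc (I : cset) (p q : C) : Prop :=
  circ p /\ circ q /\ p <> q /\ (exists z, I z) /\
  forall z, I z <-> circ z /\ orient p z q > 0.

Lemma inK_is_arc I : inK I -> exists p q, is_arc I p q.
Proof.
  intros [a [l [H1 [H2 H]]]]. pose proof PI_RGT_0.
  assert (HI : forall z, I z <-> circ z /\ orient (eang a) z (eang (a + l)) > 0).
  { intro z. rewrite H. apply arc_iff_orient_pos. lra. }
  assert (Hm : I (eang (a + l / 2))) by (apply H; exists (a + l / 2); repeat split; lra).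
  exists (eang a), (eang (a + l)).
  split; [apply circ_eang|]. split; [apply circ_eang|].
  split; [|split; [exists (eang (a + l / 2)) |]; auto].
  intro E. apply HI in Hm. rewrite E, orient_ends_eq in Hm. lra.
Qed.

Lemma inK_circ I z : inK I -> I z -> circ z.
Proof. intros H Hz. destruct (inK_is_arc I H) as [p [q [_ [_ [_ [_ HI]]]]]]. apply HI, Hz. Qed.

Lemma is_arc_img al be I p q : is_mob al be -> is_arc I p q ->
  is_arc (img (mob al be) I) (mob al be p) (mob al be q).
Proof.
  intros Hm [Hp [Hq [Hpq [[z0 Hz0] HI]]]].
  assert (Hsign : forall w, circ w -> orient (mob al be p) (mob al be w) (mob al be q) > 0 <->
                                     orient p w q > 0).
  { intros w Hw. rewrite <- (orient_mob al be p w q) by auto.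
    assert (H : 0 < Cmod (mob_den al be w) ^ 2 * Cmod (mob_den al be p) ^ 2
                    * Cmod (mob_den al be q) ^ 2).
    { apply Rmult_lt_0_compat; [apply Rmult_lt_0_compat|];
        apply pow_lt, Cmod_gt_0, mob_den_neq0; auto. }
    split; intro G; [apply Rmult_gt_0_compat; auto | apply (Rmult_lt_reg_r _ _ _ H); lra]. }
  split; [apply mob_circ; auto|]. split; [apply mob_circ; auto|]. split; [|split].
  - intro E. apply Hpq. eapply mob_inj; eauto.
  - exists (mob al be z0), z0. auto.
  - intro z. split.
    + intros [w [Hw ->]]. apply HI in Hw. destruct Hw as [Hw Hpos].
      split; [apply mob_circ|apply Hsign]; auto.
    + intros [Hz Hpos]. exists (mob (Cconj al) (- be)%C z).
      assert (Hw : circ (mob (Cconj al) (- be)%C z))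
        by (apply mob_circ; auto; apply is_mob_inv; auto).
      rewrite mob_inv_r by auto. split; auto. apply HI. split; auto.
      apply Hsign; auto. rewrite mob_inv_r; auto.
Qed.

Lemma is_arc_unique I I' p q p' q' : is_arc I p q -> is_arc I' p' q' -> same_set I I' ->
  p = p' /\ q = q'.
Proof.
  intros [Hp [Hq [Hpq [_ HI]]]] [Hp' [Hq' [Hpq' [_ HI']]]] E.
  apply orient_pos_set_inj; auto. intros z Hz.
  split; intro G.
  - assert (Iz : I z) by (apply HI; auto). apply E, HI' in Iz. tauto.
  - assert (Iz : I' z) by (apply HI'; auto). apply E, HI in Iz. tauto.
Qed.

Lemma is_arc_img_eq al be ga de I p q : is_mob al be -> is_mob ga de -> is_arc I p q ->
  img (mob al be) I = img (mob ga de) I -> mob al be p = mob ga de p /\ mob al be q = mob ga de q.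
Proof.
  intros H1 H2 D E. apply (is_arc_unique (img (mob al be) I) (img (mob ga de) I)).
  - apply is_arc_img; auto.
  - apply is_arc_img; auto.
  - rewrite E. intro z. reflexivity.
Qed.

(* A proper sub-arc has an endpoint which is not an endpoint of the big arc
   (equal endpoints give equal arcs, swapped endpoints give disjoint ones). *)
Lemma is_arc_proper_sub I J p q p' q' : is_arc I p q -> is_arc J p' q' ->
  subset J I -> ~ same_set I J -> (p' <> p /\ p' <> q) \/ (q' <> p /\ q' <> q).
Proof.
  intros [Hp [Hq [Hpq [_ HI]]]] [Hp' [Hq' [Hpq' [[w0 Hw0] HJ]]]] Hs Hn.
  destruct (classic (p' <> p /\ p' <> q)) as [|H1]; auto.
  destruct (classic (q' <> p /\ q' <> q)) as [|H2]; auto.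
  exfalso.
  assert (A1 : p' = p \/ p' = q) by (apply NNPP; intro; apply H1; split; intro; subst; tauto).
  assert (A2 : q' = p \/ q' = q) by (apply NNPP; intro; apply H2; split; intro; subst; tauto).
  destruct A1 as [->| ->], A2 as [->| ->]; try tauto.
  - apply Hn. intro z. rewrite HI, HJ. tauto.
  - pose proof (Hs w0 Hw0) as Iw. apply HI in Iw. apply HJ in Hw0.
    rewrite orient_swap in Hw0. lra.
Qed.

(** * Freeness of the action on non-degenerate simplices *)

Lemma mob_eq_of_proper_sub_arc al be ga de S J p q p' q' : is_mob al be -> is_mob ga de ->
  is_arc S p q -> is_arc J p' q' -> subset J S -> ~ same_set S J ->
  mob al be p = mob ga de p -> mob al be q = mob ga de q ->
  mob al be p' = mob ga de p' -> mob al be q' = mob ga de q' ->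
  forall z, circ z -> mob al be z = mob ga de z.
Proof.
  intros H1 H2 DS DJ Hs Hn Ep Eq Ep' Eq'.
  pose proof DS as [Hp [Hq [Hpq _]]]. pose proof DJ as [Hp' [Hq' _]].
  destruct (is_arc_proper_sub _ _ _ _ _ _ DS DJ Hs Hn) as [[N1 N2]|[N1 N2]].
  - apply (mob_eq_of_three_points al be ga de p q p'); auto.
  - apply (mob_eq_of_three_points al be ga de p q q'); auto.
Qed.

Definition nondeg (b : simplex1) : Prop := is_simplex1 b /\ ~ degenerate b.

Lemma mob_eq_of_act_simplex_eq b al be ga de : nondeg b -> is_mob al be -> is_mob ga de ->
  act_simplex (mob al be) b = act_simplex (mob ga de) b ->
  forall z, circ z -> mob al be z = mob ga de z.
Proof.
  intros [[HS [HA [HB [HAS HBS]]]] Hnd] H1 H2 E.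
  destruct b as [S A B]. simpl in *. injection E as ES EA EB.
  destruct (inK_is_arc _ HS) as [p [q DS]].
  destruct (inK_is_arc _ HA) as [pa [qa DA]].
  destruct (inK_is_arc _ HB) as [pb [qb DB]].
  destruct (is_arc_img_eq _ _ _ _ _ _ _ H1 H2 DS ES) as [Ep Eq].
  destruct (is_arc_img_eq _ _ _ _ _ _ _ H1 H2 DA EA) as [Epa Eqa].
  destruct (is_arc_img_eq _ _ _ _ _ _ _ H1 H2 DB EB) as [Epb Eqb].
  unfold degenerate in Hnd. simpl in Hnd.
  destruct (classic (same_set S A)) as [SA|SA].
  - assert (~ same_set S B).
    { intro SB. apply Hnd. split; auto. intro z. rewrite <- (SA z). apply SB. }
    apply (mob_eq_of_proper_sub_arc al be ga de S B p q pb qb); auto.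
  - apply (mob_eq_of_proper_sub_arc al be ga de S A p q pa qa); auto.
Qed.

(** * Smooth functions *)

Fixpoint derivable_n (n : nat) (f : R -> R) : Prop :=
  match n with
  | O => True
  | S n => (forall t, ex_derive f t) /\ derivable_n n (Derive f)
  end.

Lemma derivable_n_ext n f g : (forall t, f t = g t) -> derivable_n n f -> derivable_n n g.
Proof.
  revert f g. induction n as [|n IH]; intros f g E H; simpl in *; auto.
  destruct H as [H1 H2]. split.
  - intro t. apply (ex_derive_ext f); auto.
  - apply (IH (Derive f)); auto. intro t. apply Derive_ext. auto.
Qed.

Lemma derivable_n_S n f : derivable_n (S n) f -> derivable_n n f.
Proof.
  revert f. induction n as [|n IH]; intros f H; simpl; auto.
  destruct H as [H1 H2]. split; auto.
Qed.

Lemma derivable_n_const n c : derivable_n n (fun _ => c).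
Proof.
  revert c. induction n as [|n IH]; intro c; simpl; auto. split.
  - intro; apply ex_derive_const.
  - apply (derivable_n_ext n (fun _ => 0)); auto. intro t. rewrite Derive_const. reflexivity.
Qed.

Lemma derivable_n_plus n f g : derivable_n n f -> derivable_n n g ->
  derivable_n n (fun t => f t + g t).
Proof.
  revert f g. induction n as [|n IH]; intros f g Hf Hg; simpl in *; auto.
  destruct Hf as [F1 F2], Hg as [G1 G2]. split.
  - intro t. apply (ex_derive_plus f g); auto.
  - apply (derivable_n_ext n (fun t => Derive f t + Derive g t)); auto.
    intro t. rewrite Derive_plus; auto.
Qed.

Lemma derivable_n_mult n f g : derivable_n n f -> derivable_n n g ->
  derivable_n n (fun t => f t * g t).
Proof.
  revert f g. induction n as [|n IH]; intros f g Hf Hg; simpl; auto.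
  pose proof (derivable_n_S n f Hf) as Hf'. pose proof (derivable_n_S n g Hg) as Hg'.
  destruct Hf as [F1 F2], Hg as [G1 G2]. split.
  - intro t. apply ex_derive_mult; auto.
  - apply (derivable_n_ext n (fun t => Derive f t * g t + f t * Derive g t)).
    + intro t. rewrite Derive_mult; auto.
    + apply derivable_n_plus; apply IH; auto.
Qed.

Lemma derivable_n_scal n c f : derivable_n n f -> derivable_n n (fun t => c * f t).
Proof. intro H. apply derivable_n_mult; auto. apply derivable_n_const. Qed.

Lemma derivable_n_minus n f g : derivable_n n f -> derivable_n n g ->
  derivable_n n (fun t => f t - g t).
Proof.
  intros Hf Hg. apply (derivable_n_ext n (fun t => f t + (-1) * g t)); [intro; ring|].
  apply derivable_n_plus, derivable_n_scal; auto.
Qed.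

Lemma derivable_n_inv n f :
  derivable_n n f -> (forall t, f t <> 0) -> derivable_n n (fun t => / f t).
Proof.
  revert f. induction n as [|n IH]; intros f Hf Hnz; simpl; auto.
  pose proof (derivable_n_S n f Hf) as Hf'. destruct Hf as [F1 F2]. split.
  - intro t. apply ex_derive_inv; auto.
  - apply (derivable_n_ext n (fun t => (-1) * (Derive f t * (/ f t * / f t)))).
    + intro t. rewrite Derive_inv; auto. field. auto.
    + apply derivable_n_scal, derivable_n_mult; auto. apply derivable_n_mult; apply IH; auto.
Qed.

Lemma derivable_n_comp n h g : derivable_n n h -> derivable_n n g ->
  derivable_n n (fun t => h (g t)).
Proof.
  revert h g. induction n as [|n IH]; intros h g Hh Hg; simpl; auto.
  pose proof (derivable_n_S n g Hg) as Hg'. destruct Hh as [H1 H2], Hg as [G1 G2]. split.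
  - intro t. apply (ex_derive_comp h g); auto.
  - apply (derivable_n_ext n (fun t => Derive g t * Derive h (g t))).
    + intro t. symmetry. apply Derive_comp; auto.
    + apply derivable_n_mult; auto.
Qed.

Lemma derivable_n_cos_sin n : derivable_n n cos /\ derivable_n n sin.
Proof.
  induction n as [|n [Hc Hs]]; simpl; auto. split; split.
  - intro t. eexists. apply is_derive_cos.
  - apply (derivable_n_ext n (fun t => (-1) * sin t)); [|apply derivable_n_scal; auto].
    intro t. rewrite (is_derive_unique _ _ _ (is_derive_cos t)). ring.
  - intro t. eexists. apply is_derive_sin.
  - apply (derivable_n_ext n cos); auto.
    intro t. rewrite (is_derive_unique _ _ _ (is_derive_sin t)). reflexivity.
Qed.

Lemma ex_derive_n_of_derivable_n f : (forall n, derivable_n n f) -> forall n t, ex_derive_n f n t.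
Proof.
  intros H n. destruct n as [|n]; simpl; auto.
  specialize (H (S n)). revert f H. induction n as [|n IH]; intros f [H1 H2] t.
  - apply (ex_derive_ext f); auto.
  - assert (G : forall t, ex_derive (Derive_n (Derive f) n) t) by (apply IH; auto).
    apply (ex_derive_ext (Derive_n (Derive f) n)); auto.
    intro s. change (Derive_n (Derive_n f 1) n s = Derive_n f (S n) s).
    rewrite Derive_n_comp. f_equal. lia.
Qed.

(* [x^-k e^(-1/x)] for [x > 0] and [0] otherwise; the derivative of [expinv k] is a
   combination of [expinv (k+1)] and [expinv (k+2)], so all of them are smooth. *)
Definition expinv (k : nat) (x : R) : R :=
  match Rlt_dec 0 x with left _ => (/ x) ^ k * exp (- / x) | right _ => 0 end.

Lemma exp_mult_nat m a : exp (INR m * a) = exp a ^ m.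
Proof.
  induction m as [|m IH]. simpl. rewrite Rmult_0_l. apply exp_0.
  rewrite S_INR, Rmult_plus_distr_r, Rmult_1_l, exp_plus, IH. simpl. ring.
Qed.

Lemma exp_pow_ge y n : 0 <= y -> (y / INR (S n)) ^ (S n) <= exp y.
Proof.
  intro Hy. assert (HN : 0 < INR (S n)) by (apply lt_0_INR; lia).
  replace y with (INR (S n) * (y / INR (S n))) at 2 by (field; lra).
  rewrite exp_mult_nat. apply pow_incr. split.
  - apply Rmult_le_pos; auto. left. apply Rinv_0_lt_compat; auto.
  - destruct (Req_dec (y / INR (S n)) 0) as [E|E].
    + rewrite E. left. apply exp_pos.
    + pose proof (exp_ineq1 _ E). lra.
Qed.

Lemma expinv_sq_bound k h : Rabs (expinv k h) <= INR (S (S k)) ^ (S (S k)) * h ^ 2.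
Proof.
  set (N := S (S k)). assert (HN : 0 < INR N) by (apply lt_0_INR; unfold N; lia).
  assert (0 < INR N ^ N) by (apply pow_lt; auto).
  unfold expinv. destruct (Rlt_dec 0 h) as [Hh|Hh].
  2: { rewrite Rabs_R0. apply Rmult_le_pos; [lra | apply pow2_ge_0]. }
  set (y := / h). assert (Hy : 0 < y) by (apply Rinv_0_lt_compat; auto).
  assert (0 < y ^ N) by (apply pow_lt; auto). assert (0 < y ^ k) by (apply pow_lt; auto).
  assert (Ey : (y / INR N) ^ N = y ^ N / INR N ^ N)
    by (unfold Rdiv; rewrite Rpow_mult_distr, pow_inv; reflexivity).
  pose proof (exp_pow_ge y (S k) (Rlt_le _ _ Hy)) as E. fold N in E. rewrite Ey in E.
  rewrite Rabs_pos_eq by (apply Rmult_le_pos; [lra | left; apply exp_pos]).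
  rewrite exp_Ropp.
  apply Rle_trans with (y ^ k * / (y ^ N / INR N ^ N)).
  - apply Rmult_le_compat_l; [lra|]. apply Rinv_le_contravar; auto.
    apply Rdiv_lt_0_compat; auto.
  - right. replace (y ^ N) with (y ^ k * y ^ 2) by (unfold N; rewrite <- pow_add; f_equal; lia).
    unfold y. field. repeat split; try lra; apply pow_nonzero; try lra.
    apply Rinv_neq_0_compat. lra.
Qed.

Lemma derivable_pt_lim_0_of_sq_bound f c : f 0 = 0 -> (forall h, Rabs (f h) <= c * h ^ 2) ->
  derivable_pt_lim f 0 0.
Proof.
  intros H0 Hb eps Heps.
  assert (Hc : 0 <= c) by (specialize (Hb 1); pose proof (Rabs_pos (f 1)); simpl in Hb; lra).
  exists (mkposreal (eps / (c + 1)) ltac:(apply Rdiv_lt_0_compat; lra)). simpl.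
  intros h Hh Hhd. rewrite Rplus_0_l, H0, Rminus_0_r, Rminus_0_r.
  unfold Rdiv. rewrite Rabs_mult, Rabs_inv.
  pose proof (Rabs_pos_lt h Hh).
  apply (Rmult_lt_reg_r (Rabs h)); auto. rewrite Rmult_assoc, Rinv_l, Rmult_1_r by lra.
  apply Rle_lt_trans with (c * Rabs h * Rabs h).
  - replace (c * Rabs h * Rabs h) with (c * h ^ 2) by (rewrite <- pow2_abs; ring). apply Hb.
  - apply Rmult_lt_compat_r; auto.
    apply Rle_lt_trans with (c * (eps / (c + 1))); [apply Rmult_le_compat_l; lra|].
    apply (Rmult_lt_reg_r (c + 1)); [lra|]. field_simplify; lra.
Qed.

Lemma is_derive_expinv k x :
  is_derive (expinv k) x (- INR k * expinv (S k) x + expinv (S (S k)) x).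
Proof.
  unfold expinv at 2 3. destruct (Rtotal_order x 0) as [Hx|[->|Hx]].
  - destruct (Rlt_dec 0 x); [lra|]. replace (- INR k * 0 + 0) with 0 by ring.
    apply (is_derive_ext_loc (fun _ => 0)); [|apply is_derive_Reals, derivable_pt_lim_const].
    apply filter_imp with (fun t => t < 0); [|apply open_lt; auto].
    intros t Ht. unfold expinv. destruct (Rlt_dec 0 t); [lra|auto].
  - destruct (Rlt_dec 0 0); [lra|]. replace (- INR k * 0 + 0) with 0 by ring.
    apply is_derive_Reals, (derivable_pt_lim_0_of_sq_bound _ (INR (S (S k)) ^ (S (S k)))).
    + unfold expinv. destruct (Rlt_dec 0 0); [lra|auto].
    + apply expinv_sq_bound.
  - destruct (Rlt_dec 0 x); [|lra].
    apply (is_derive_ext_loc (fun t => (/ t) ^ k * exp (- / t))).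
    + apply filter_imp with (fun t => 0 < t); [|apply open_gt; auto].
      intros t Ht. unfold expinv. destruct (Rlt_dec 0 t); [auto|lra].
    + auto_derive; [repeat split; lra|]. destruct k; simpl; field; lra.
Qed.

Lemma derivable_n_expinv n : forall k, derivable_n n (expinv k).
Proof.
  induction n as [|n IH]; intro k; simpl; auto. split.
  - intro t. eexists. apply is_derive_expinv.
  - apply (derivable_n_ext n (fun t => - INR k * expinv (S k) t + expinv (S (S k)) t)).
    + intro t. symmetry. apply is_derive_unique, is_derive_expinv.
    + apply derivable_n_plus; auto. apply derivable_n_scal; auto.
Qed.

Definition psi : R -> R := expinv 0.

Lemma psi_nonneg x : 0 <= psi x.
Proof.
  unfold psi, expinv. destruct (Rlt_dec 0 x); [|lra]. simpl. rewrite Rmult_1_l.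
  left; apply exp_pos.
Qed.

Lemma psi_pos x : 0 < x -> 0 < psi x.
Proof.
  intro H. unfold psi, expinv. destruct (Rlt_dec 0 x); [|lra]. simpl. rewrite Rmult_1_l.
  apply exp_pos.
Qed.

Lemma psi_zero x : x <= 0 -> psi x = 0.
Proof. intro H. unfold psi, expinv. destruct (Rlt_dec 0 x); [lra|auto]. Qed.

Lemma psi_smooth n : derivable_n n psi.
Proof. apply derivable_n_expinv. Qed.

Definition Cderivable_n (n : nat) (w : R -> C) : Prop :=
  derivable_n n (fun t => fst (w t)) /\ derivable_n n (fun t => snd (w t)).

Lemma Cderivable_n_const n c : Cderivable_n n (fun _ => c).
Proof. split; apply derivable_n_const. Qed.

Lemma Cderivable_n_eang n : Cderivable_n n eang.
Proof. apply (derivable_n_cos_sin n). Qed.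

Lemma Cderivable_n_plus n u v : Cderivable_n n u -> Cderivable_n n v ->
  Cderivable_n n (fun t => (u t + v t)%C).
Proof. intros [U1 U2] [V1 V2]. split; apply derivable_n_plus; auto. Qed.

Lemma Cderivable_n_mult n u v : Cderivable_n n u -> Cderivable_n n v ->
  Cderivable_n n (fun t => (u t * v t)%C).
Proof.
  intros [U1 U2] [V1 V2]. split; simpl.
  - apply derivable_n_minus; apply derivable_n_mult; auto.
  - apply derivable_n_plus; apply derivable_n_mult; auto.
Qed.

Lemma Cderivable_n_inv n u :
  Cderivable_n n u -> (forall t, u t <> 0%C) -> Cderivable_n n (fun t => (/ u t)%C).
Proof.
  intros [U1 U2] Hnz.
  assert (Hsq : forall t, fst (u t) ^ 2 + snd (u t) ^ 2 <> 0).
  { intros t E. apply (Hnz t). destruct (u t) as [a b]. simpl in E.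
    assert (a = 0) by nra. assert (b = 0) by nra. subst. reflexivity. }
  assert (Q : derivable_n n (fun t => / (fst (u t) ^ 2 + snd (u t) ^ 2))).
  { apply derivable_n_inv; auto.
    apply derivable_n_plus; apply derivable_n_mult; auto; apply derivable_n_mult; auto;
      apply derivable_n_const. }
  split; simpl.
  - apply (derivable_n_ext n (fun t => fst (u t) * / (fst (u t) ^ 2 + snd (u t) ^ 2)));
      [reflexivity | apply derivable_n_mult; auto].
  - apply (derivable_n_ext n (fun t => (-1) * snd (u t) * / (fst (u t) ^ 2 + snd (u t) ^ 2))).
    + intro. unfold Cinv. simpl. unfold Rdiv. ring.
    + apply derivable_n_mult; auto. apply derivable_n_scal; auto.
Qed.

Lemma Cderivable_n_mob n al be u : is_mob al be -> Cderivable_n n u -> (forall t, circ (u t)) ->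
  Cderivable_n n (fun t => mob al be (u t)).
Proof.
  intros Hm Hu Hc. unfold mob, Cdiv.
  assert (Haff : forall a b, Cderivable_n n (fun t => (a * u t + b)%C)).
  { intros a b. apply Cderivable_n_plus; [|apply Cderivable_n_const].
    apply Cderivable_n_mult; [apply Cderivable_n_const | auto]. }
  apply Cderivable_n_mult, Cderivable_n_inv; auto.
  intro t. apply (mob_den_neq0 al be (u t) Hm (Hc t)).
Qed.

Lemma derivable_n_orient n p q u : Cderivable_n n u -> derivable_n n (fun t => orient p (u t) q).
Proof.
  intros [U1 U2].
  apply (derivable_n_ext n
    (fun t => (fst (u t) - fst p) * (snd q - snd p) - (snd (u t) - snd p) * (fst q - fst p))).
  - intro t. symmetry. apply orient_coord.
  - apply derivable_n_minus; apply derivable_n_mult; try apply derivable_n_const;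
      apply derivable_n_minus; auto; apply derivable_n_const.
Qed.

(** * The invariant cochain *)

Lemma simplex_circ b : is_simplex1 b ->
  (forall z, supp b z -> circ z) /\ (forall z, bd0 b z -> circ z) /\ (forall z, bd1 b z -> circ z).
Proof. intros [H1 [H2 [H3 _]]]. split; [|split]; intro z; apply inK_circ; auto. Qed.

Lemma img_mob_comp al be ga de (S : cset) : is_mob al be -> is_mob ga de ->
  (forall z, S z -> circ z) ->
  img (mob al be) (img (mob ga de) S) =
  img (mob (mob_comp_al al be ga de) (mob_comp_be al be ga de)) S.
Proof.
  intros H1 H2 HS. apply functional_extensionality. intro z. apply propositional_extensionality.
  split.
  - intros [w [[u [Hu ->]] ->]]. exists u. split; auto. apply mob_comp; auto.
  - intros [u [Hu ->]]. exists (mob ga de u).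
    split; [exists u; auto | symmetry; apply mob_comp; auto].
Qed.

Lemma img_mob_inv al be (S : cset) : is_mob al be -> (forall z, S z -> circ z) ->
  img (mob (Cconj al) (- be)%C) (img (mob al be) S) = S.
Proof.
  intros H HS. apply functional_extensionality. intro z. apply propositional_extensionality.
  split.
  - intros [w [[u [Hu ->]] ->]]. rewrite mob_inv_l; auto.
  - intro Hz. exists (mob al be z). split; [exists z; auto|]. rewrite mob_inv_l; auto.
Qed.

Lemma img_mob_id (S : cset) : img (mob 1%C 0%C) S = S.
Proof.
  apply functional_extensionality. intro z. apply propositional_extensionality.
  split; [intros [w [Hw ->]]; rewrite mob_id; auto | intro Hz; exists z; rewrite mob_id; auto].
Qed.

Lemma act_simplex_comp al be ga de b : is_mob al be -> is_mob ga de -> is_simplex1 b ->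
  act_simplex (mob al be) (act_simplex (mob ga de) b) =
  act_simplex (mob (mob_comp_al al be ga de) (mob_comp_be al be ga de)) b.
Proof.
  intros H1 H2 Hb. destruct (simplex_circ b Hb) as [C1 [C2 C3]].
  destruct b as [S A B]. unfold act_simplex. simpl in *. rewrite !img_mob_comp; auto.
Qed.

Lemma act_simplex_inv al be b : is_mob al be -> is_simplex1 b ->
  act_simplex (mob (Cconj al) (- be)%C) (act_simplex (mob al be) b) = b.
Proof.
  intros H Hb. destruct (simplex_circ b Hb) as [C1 [C2 C3]].
  destruct b as [S A B]. unfold act_simplex. simpl in *. rewrite !img_mob_inv; auto.
Qed.

Lemma act_simplex_id b : act_simplex (mob 1%C 0%C) b = b.
Proof. destruct b. unfold act_simplex. simpl. rewrite !img_mob_id. reflexivity. Qed.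

Definition orbit (b : simplex1) : simplex1 -> Prop :=
  fun b' => nondeg b' /\ exists al be, is_mob al be /\ act_simplex (mob al be) b' = b.

Lemma orbit_act al be b : is_mob al be -> is_simplex1 b ->
  orbit (act_simplex (mob al be) b) = orbit b.
Proof.
  intros Hm Hb. apply functional_extensionality. intro b'. apply propositional_extensionality.
  unfold orbit. split; intros [Hg [ga [de [Hgd E]]]]; split; auto.
  - exists (mob_comp_al (Cconj al) (- be)%C ga de), (mob_comp_be (Cconj al) (- be)%C ga de).
    pose proof (is_mob_inv _ _ Hm) as Hm'. split; [apply is_mob_comp; auto|].
    rewrite <- act_simplex_comp, E by (auto; apply Hg). apply act_simplex_inv; auto.
  - exists (mob_comp_al al be ga de), (mob_comp_be al be ga de). split; [apply is_mob_comp; auto|].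
    rewrite <- act_simplex_comp, E by (auto; apply Hg). reflexivity.
Qed.

Definition orbit_rep (b : simplex1) : simplex1 :=
  epsilon (inhabits (Simplex1 circ circ circ)) (orbit b).

Definition carries_rep (b : simplex1) (g : C * C) : Prop :=
  is_mob (fst g) (snd g) /\ act_simplex (mob (fst g) (snd g)) (orbit_rep b) = b.

Definition orbit_map (b : simplex1) : C * C :=
  epsilon (inhabits ((RtoC 1, RtoC 0) : C * C)) (carries_rep b).

Definition arc_ends (I : cset) : C * C :=
  epsilon (inhabits ((RtoC 0, RtoC 0) : C * C)) (fun pq => is_arc I (fst pq) (snd pq)).

Lemma arc_ends_spec I : inK I -> is_arc I (fst (arc_ends I)) (snd (arc_ends I)).
Proof.
  intro HI. destruct (inK_is_arc I HI) as [p [q D]].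
  exact (epsilon_spec _ (fun pq : C * C => is_arc I (fst pq) (snd pq)) (ex_intro _ (p, q) D)).
Qed.

Definition bump_cochain_value (b : simplex1) (z : C) : R :=
  psi (orient (fst (arc_ends (supp (orbit_rep b))))
              (mob (Cconj (fst (orbit_map b))) (- snd (orbit_map b))%C z)
              (snd (arc_ends (supp (orbit_rep b))))).

Definition bump_cochain (b : simplex1) (z : C) : R :=
  if excluded_middle_informative (exists b', orbit b b') then bump_cochain_value b z else 0.

Section Representatives.

Variable b : simplex1.
Hypothesis orbit_ne : exists b', orbit b b'.

Lemma orbit_rep_spec : orbit b (orbit_rep b).
Proof. destruct orbit_ne as [b' H]. unfold orbit_rep. apply epsilon_spec. exists b'. exact H. Qed.

Lemma orbit_map_spec : carries_rep b (orbit_map b).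
Proof.
  destruct orbit_rep_spec as [_ [al [be [Hm E]]]].
  unfold orbit_map. apply epsilon_spec. exists (al, be). split; auto.
Qed.

Lemma orbit_rep_ends :
  is_arc (supp (orbit_rep b))
    (fst (arc_ends (supp (orbit_rep b)))) (snd (arc_ends (supp (orbit_rep b)))).
Proof. apply arc_ends_spec, orbit_rep_spec. Qed.

End Representatives.

Lemma bump_cochain_invariant : mob_invariant bump_cochain.
Proof.
  intros al be Hm b Hb z Hz. unfold bump_cochain. rewrite (orbit_act al be b Hm Hb).
  destruct (excluded_middle_informative (exists b', orbit b b')) as [HO|HO]; auto.
  assert (Hrep : orbit_rep (act_simplex (mob al be) b) = orbit_rep b)
    by (unfold orbit_rep; rewrite orbit_act; auto).
  assert (HO' : exists b', orbit (act_simplex (mob al be) b) b') by (rewrite orbit_act; auto).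
  destruct (orbit_map_spec b HO) as [H1 E1].
  destruct (orbit_map_spec _ HO') as [H2 E2]. rewrite Hrep in E2.
  destruct (orbit_rep_spec b HO) as [Hnd _].
  unfold bump_cochain_value. rewrite Hrep.
  set (b0 := orbit_rep b) in *.
  set (a1 := fst (orbit_map b)) in *. set (c1 := snd (orbit_map b)) in *.
  set (a2 := fst (orbit_map (act_simplex (mob al be) b))) in *.
  set (c2 := snd (orbit_map (act_simplex (mob al be) b))) in *.
  (* both [mob a2 c2] and [g o mob a1 c1] carry [b0] to [g b], so they coincide *)
  assert (E3 : act_simplex (mob a2 c2) b0 =
               act_simplex (mob (mob_comp_al al be a1 c1) (mob_comp_be al be a1 c1)) b0)
    by (rewrite E2, <- act_simplex_comp, E1 by (auto; apply Hnd); reflexivity).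
  pose proof (mob_eq_of_act_simplex_eq b0 _ _ _ _ Hnd H2 (is_mob_comp _ _ _ _ Hm H1) E3) as Eg.
  set (w := mob (Cconj a1) (- c1)%C z).
  assert (Hw : circ w) by (apply mob_circ; auto; apply is_mob_inv; auto).
  assert (Ew : mob a2 c2 w = mob al be z)
    by (rewrite Eg, <- mob_comp by auto; unfold w; rewrite mob_inv_r; auto).
  rewrite <- Ew, mob_inv_l; auto.
Qed.

Lemma bump_cochain_value_smooth b : (exists b', orbit b b') -> smooth_S1 (bump_cochain_value b).
Proof.
  intro HO. destruct (orbit_map_spec b HO) as [H1 _].
  unfold smooth_S1. apply ex_derive_n_of_derivable_n. intro n. unfold bump_cochain_value.
  apply derivable_n_comp; [apply psi_smooth|].
  apply derivable_n_orient, Cderivable_n_mob; auto using Cderivable_n_eang, circ_eang.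
  apply is_mob_inv; auto.
Qed.

Lemma bump_cochain_cochain1 : cochain1 bump_cochain.
Proof.
  intros b Hb. unfold bump_cochain.
  destruct (excluded_middle_informative (exists b', orbit b b')) as [HO|HO].
  - split; [apply bump_cochain_value_smooth; auto|].
    intros z Hz Hcl. unfold bump_cochain_value. apply psi_zero.
    destruct (orbit_map_spec b HO) as [H1 E1].
    destruct (orbit_rep_ends b HO) as [_ [_ [_ [_ HI]]]].
    set (w := mob (Cconj (fst (orbit_map b))) (- snd (orbit_map b))%C z) in *.
    apply Rnot_lt_le. intro Hpos. apply Hcl.
    assert (Sz : supp b z).
    { rewrite <- E1. simpl. exists w. split.
      - apply HI. split; [apply mob_circ; auto; apply is_mob_inv; auto | lra].
      - unfold w. rewrite mob_inv_r; auto. }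
    intros eps Heps. exists z. split; auto. unfold Cminus. rewrite Cplus_opp_r, Cmod_0. exact Heps.
  - split; [intros n t; apply ex_derive_n_of_derivable_n; intro m; apply derivable_n_const | auto].
Qed.

Lemma bump_cochain_pos b : nondeg b ->
  (exists z, circ z /\ bump_cochain b z <> 0) /\ (forall z, circ z -> 0 <= bump_cochain b z).
Proof.
  intros Hnd.
  assert (HO : exists b', orbit b b').
  { exists b. split; auto. exists 1%C, 0%C. split; [apply is_mob_id | apply act_simplex_id]. }
  unfold bump_cochain.
  destruct (excluded_middle_informative (exists b', orbit b b')) as [_|]; [|tauto].
  split; [|intros z _; apply psi_nonneg].
  destruct (orbit_map_spec b HO) as [H1 _].
  destruct (orbit_rep_ends b HO) as [_ [_ [_ [[m Hm] HI]]]].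
  apply HI in Hm. destruct Hm as [Hmc Hmpos].
  exists (mob (fst (orbit_map b)) (snd (orbit_map b)) m). split; [apply mob_circ; auto|].
  unfold bump_cochain_value. rewrite mob_inv_l by auto. apply Rgt_not_eq, psi_pos. exact Hmpos.
Qed.

Theorem proposition4p13 :
  exists f : simplex1 -> C -> R,
    cochain1 f /\ mob_invariant f /\
    forall b, is_simplex1 b -> ~ degenerate b ->
      (exists z, circ z /\ f b z <> 0) /\ (forall z, circ z -> 0 <= f b z).
Proof.
  exists bump_cochain.
  split; [apply bump_cochain_cochain1|]. split; [apply bump_cochain_invariant|].
  intros b Hb Hnd. apply bump_cochain_pos. split; auto.
Qed.
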